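(* Let $N=M=1$ (one input, one output). Suppose the production possibility set $T$ generated by the DMUs' data has $\phi>2$ extreme points $(x^1,y^1),\dots,(x^\phi,y^\phi)$, ordered so that $x^1<\dots<x^\phi$ and $y^1<\dots<y^\phi$. Let DMU $\hat\imath$ have data $(x^{\hat\imath},y^{\hat\imath})$. For $\sigma\ge0$ define the virtual point $v(\sigma)=(x^{\hat\imath}-\sigma,\,y^{\hat\imath}+\sigma)$ and the translated lines: $EF_{k,k+1}(\sigma)$, the straight line through $(x^k+\sigma,y^k-\sigma)$ and $(x^{k+1}+\sigma,y^{k+1}-\sigma)$ for $k=1,\dots,\phi-1$; $EF_1(\sigma)$, the vertical line $x=x^1+\sigma$; and $EF_\phi(\sigma)$, the horizontal line $y=y^\phi-\sigma$. For each such family $L$ let the amount of uncertainty required for $L$ be the least $\sigma\ge0$ with $v(\sigma)\in L(\sigma)$ (infinite if none exists). Then the line of the efficient frontier requiring the minimum amount of uncertainty for DMU $\hat\imath$ is determined as follows: if $y^{\hat\imath}+x^{\hat\imath}\le y^1+x^1$ it is $EF_1$; if $y^k+x^k\le y^{\hat\imath}+x^{\hat\imath}\le y^{k+1}+x^{k+1}$ for some $k\in\{1,\dots,\phi-1\}$ it is $EF_{k,k+1}$; if $y^\phi+x^\phi\le y^{\hat\imath}+x^{\hat\imath}$ it is $EF_\phi$.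
   Context: DEA setting: $I$ DMUs with nonnegative input data $X\in\mathbb{R}^{N\times I}$ and output data $Y\in\mathbb{R}^{M\times I}$ (column $i$ gives $(x^i,y^i)$). The (variable returns to scale) production possibility set is $T=\{(x,y): x\ge X\lambda,\ y\le Y\lambda,\ e^T\lambda=1,\ \lambda\ge0\}$. DMU $\hat\imath$ is the (inefficient) DMU under consideration. Under box uncertainty of size $\sigma$, the favourable realisation moves DMU $\hat\imath$ to $(x^{\hat\imath}-\sigma,y^{\hat\imath}+\sigma)$ and every other DMU $i$ to $(x^i+\sigma,y^i-\sigma)$, so the frontier lines are translated by $(\sigma,-\sigma)$. *)

From mathcomp Require Import all_boot all_order all_algebra.
Set Implicit Arguments. Unset Strict Implicit. Unset Printing Implicit Defensive.
Import Order.TTheory GRing.Theory Num.Theory.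
Local Open Scope ring_scope.

Section DEA.
Variable R : realFieldType.

(* VRS production possibility set with one input and one output:
   data x_i = X i, y_i = Y i for DMUs i : 'I_n. *)
Definition inT (n : nat) (X Y : 'I_n -> R) (p : R * R) : Prop :=
  exists lam : 'I_n -> R,
    (forall i, 0 <= lam i) /\ \sum_(i < n) lam i = 1 /\
    \sum_(i < n) lam i * X i <= p.1 /\ p.2 <= \sum_(i < n) lam i * Y i.

Definition extreme_point (S : R * R -> Prop) (p : R * R) : Prop :=
  S p /\
  forall (a b : R * R) (t : R), S a -> S b -> 0 < t -> t < 1 ->
    p = (t * a.1 + (1 - t) * b.1, t * a.2 + (1 - t) * b.2) -> a = b.

(* Lines of the efficient frontier (extreme points indexed 0 .. phi-1). *)
Inductive ef_line : Type :=
  | EF_first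
  | EF_seg of nat
  | EF_last.

Definition valid_line (phi : nat) (L : ef_line) : bool :=
  match L with EF_seg k => (k.+1 < phi)%N | _ => true end.

Definition on_line (phi : nat) (ex ey : nat -> R) (L : ef_line)
    (sigma : R) (p : R * R) : Prop :=
  match L with
  | EF_first => p.1 = ex 0%N + sigma
  | EF_last => p.2 = ey phi.-1 - sigma
  | EF_seg k =>
      (p.1 - (ex k + sigma)) * ((ey k.+1 - sigma) - (ey k - sigma)) =
      (p.2 - (ey k - sigma)) * ((ex k.+1 + sigma) - (ex k + sigma))
  end.

Definition vpt (xh yh sigma : R) : R * R := (xh - sigma, yh + sigma).

Definition required_unc phi ex ey xh yh (L : ef_line) (s : R) : Prop :=
  0 <= s /\ on_line phi ex ey L s (vpt xh yh s) /\
  forall s', 0 <= s' -> on_line phi ex ey L s' (vpt xh yh s') -> s <= s'.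

(* L requires the minimum amount of uncertainty among all frontier lines:
   its amount is finite and no other line (whose amount may be infinite)
   requires less. *)
Definition min_unc_line phi ex ey xh yh (L : ef_line) : Prop :=
  exists s, required_unc phi ex ey xh yh L s /\
    forall L', valid_line phi L' -> forall s', 0 <= s' ->
      on_line phi ex ey L' s' (vpt xh yh s') -> s <= s'.

End DEA.

From mathcomp Require Import all_boot all_order all_algebra.
From mathcomp Require Import ring lra.
Set Implicit Arguments. Unset Strict Implicit. Unset Printing Implicit Defensive.
Import Order.TTheory GRing.Theory Num.Theory.
Local Open Scope ring_scope.

(* Translating both v(sigma) and L(sigma) back by (-sigma, sigma), the point
   v(sigma) lies on L(sigma) iff (xh - 2 sigma, yh + 2 sigma) lies on the
   untranslated line L(0): the uncertainty required for L is half the distance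
   from DMU ihat to L(0) along the antidiagonal x + y = const.  Each frontier
   line bounds a half-plane containing T, because its linear form is maximised
   over T at an extreme point and the extreme points form a concave chain.
   Hence if the antidiagonal leaves T through a point W of L(0), every other
   frontier line meets the antidiagonal at or beyond W, and L is reached first.
   The three cases of the theorem say on which line W lies. *)

Section Plane.
Variable R : realFieldType.

Definition conv (t : R) (u v : R * R) : R * R :=
  (t * u.1 + (1 - t) * v.1, t * u.2 + (1 - t) * v.2).

Definition lform (a b : R) (p : R * R) : R := a * p.2 - b * p.1.

Lemma lform_conv a b t u v :
  lform a b (conv t u v) = t * lform a b u + (1 - t) * lform a b v.
Proof. by rewrite /lform /=; ring. Qed.

Lemma lform_shift a b p d :
  lform a b (p.1 - d, p.2 + d) = lform a b p + d * (a + b).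
Proof. by rewrite /lform /=; ring. Qed.

Lemma lform_inj a b c d u v : a * d - b * c != 0 ->
  lform a b u = lform a b v -> lform c d u = lform c d v -> u = v.
Proof.
move=> D e1 e2.
have /eqP : (a * d - b * c) * (u.1 - v.1) = 0.
  have -> : (a * d - b * c) * (u.1 - v.1) =
    c * (lform a b u - lform a b v) - a * (lform c d u - lform c d v).
    by rewrite /lform; ring.
  by rewrite e1 e2 !subrr !mulr0 subrr.
have /eqP : (a * d - b * c) * (u.2 - v.2) = 0.
  have -> : (a * d - b * c) * (u.2 - v.2) =
    d * (lform a b u - lform a b v) - b * (lform c d u - lform c d v).
    by rewrite /lform; ring.
  by rewrite e1 e2 !subrr !mulr0 subrr.
rewrite !mulf_eq0 (negbTE D) /= !subr_eq0 => /eqP eq2 /eqP eq1.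
by case: u v eq1 eq2 {e1 e2} => [? ?] [? ?] /= -> ->.
Qed.

Lemma conv_eq_max (t x y m : R) : 0 < t -> t < 1 ->
  x <= m -> y <= m -> t * x + (1 - t) * y = m -> x = m /\ y = m.
Proof. by move=> *; split; nra. Qed.

Lemma convex_sum_le n (l F : 'I_n -> R) M :
  (forall i, 0 <= l i) -> \sum_i l i = 1 ->
  (forall i, l i != 0 -> F i <= M) -> \sum_i l i * F i <= M.
Proof.
move=> l0 l1 FM; rewrite -[M]mul1r -l1 mulr_suml; apply: ler_sum => i _.
by have [->|/FM] := eqVneq (l i) 0; rewrite ?mul0r // => /ler_wpM2l; apply.
Qed.

End Plane.

Section ProductionSet.
Variables (R : realFieldType) (n : nat) (X Y : 'I_n -> R).

Local Notation T := (inT X Y).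

Lemma inT_data i : T (X i, Y i).
Proof.
exists (fun j => if j == i then 1 else 0).
have sum1 (F : 'I_n -> R) : \sum_j (if j == i then 1 else 0) * F j = F i.
  by rewrite (bigD1 i) //= eqxx mul1r big1 ?addr0 // => j /negbTE ->; rewrite mul0r.
split; first by move=> j; case: (j == i).
split; last by rewrite !sum1.
by rewrite -[RHS](sum1 (fun=> 1)); apply: eq_bigr => j _; rewrite mulr1.
Qed.

Lemma inT_free_disposal p q : T p -> p.1 <= q.1 -> q.2 <= p.2 -> T q.
Proof.
move=> [l [l0 [l1 [lx ly]]]] le1 le2; exists l; do !split => //.
  exact: le_trans le1.
by apply: le_trans ly.
Qed.

Lemma inT_conv (t : R) u v : T u -> T v -> 0 <= t -> t <= 1 -> T (conv t u v).
Proof.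
move=> [l [l0 [l1 [lx ly]]]] [m [m0 [m1 [mx my]]]] t0 t1.
have t1' : 0 <= 1 - t by rewrite subr_ge0.
have sum_conv (F : 'I_n -> R) : \sum_i (t * l i + (1 - t) * m i) * F i =
    t * \sum_i l i * F i + (1 - t) * \sum_i m i * F i.
  by rewrite !mulr_sumr -big_split; apply: eq_bigr => i _ /=; ring.
exists (fun i => t * l i + (1 - t) * m i); split; [|split; [|split]] => /=.
- by move=> i; apply: addr_ge0; apply: mulr_ge0.
- by rewrite big_split /= -!mulr_sumr l1 m1; ring.
- by rewrite sum_conv; apply: lerD; apply: ler_wpM2l.
- by rewrite sum_conv; apply: lerD; apply: ler_wpM2l.
Qed.

Lemma inT_gt0 p : T p -> (0 < n)%N.
Proof.
move=> [l [_ [l1 _]]]; rewrite lt0n; apply/negP => /eqP n0.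
suff : \sum_i l i = 0 by rewrite l1 => /eqP; rewrite oner_eq0.
by apply: big1 => i; move: (ltn_ord i); rewrite [X in (_ < X)%N]n0.
Qed.

Lemma lform_le_weighted (a b : R) p (l : 'I_n -> R) : 0 <= a -> 0 <= b ->
  \sum_i l i * X i <= p.1 -> p.2 <= \sum_i l i * Y i ->
  lform a b p <= \sum_i l i * lform a b (X i, Y i).
Proof.
move=> a0 b0 lx ly.
have -> : \sum_i l i * lform a b (X i, Y i) =
    a * \sum_i l i * Y i - b * \sum_i l i * X i.
  by rewrite !mulr_sumr -sumrB; apply: eq_bigr => i _; rewrite /lform /=; ring.
by apply: lerB; apply: ler_wpM2l.
Qed.

Lemma inT_lform_le (a b M : R) p : 0 <= a -> 0 <= b ->
  (forall i, lform a b (X i, Y i) <= M) -> T p -> lform a b p <= M.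
Proof.
move=> a0 b0 FM [l [l0 [l1 [lx ly]]]].
apply: le_trans (lform_le_weighted a0 b0 lx ly) _.
exact: convex_sum_le.
Qed.

(* The weights of a point of T maximising [lform a b] vanish off the
   maximising data points. *)
Lemma inT_lform_face (a b c d M N : R) p : 0 <= a -> 0 <= b -> 0 <= c -> 0 <= d ->
  (forall i, lform a b (X i, Y i) <= M) ->
  (forall i, lform a b (X i, Y i) = M -> lform c d (X i, Y i) <= N) ->
  T p -> lform a b p = M -> lform c d p <= N.
Proof.
move=> a0 b0 c0 d0 FM GN [l [l0 [l1 [lx ly]]]] pM.
have sumM : \sum_i l i * lform a b (X i, Y i) = M.
  apply/eqP; rewrite eq_le convex_sum_le //= -pM.
  exact: lform_le_weighted.
have gap0 : \sum_i l i * (M - lform a b (X i, Y i)) = 0.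
  under eq_bigr do rewrite mulrBr.
  by rewrite sumrB -mulr_suml l1 mul1r sumM subrr.
apply: le_trans (lform_le_weighted c0 d0 lx ly) _.
apply: convex_sum_le => // i li0; apply: GN; apply/eqP; rewrite eq_sym -subr_eq0.
have gap_ge0 j : true -> 0 <= l j * (M - lform a b (X j, Y j)).
  by move=> _; apply: mulr_ge0; rewrite ?subr_ge0.
by move/eqP: (psumr_eq0P gap_ge0 gap0 (i := i) isT); rewrite mulf_eq0 (negbTE li0).
Qed.

(* The lexicographic maximiser of (lform a b, lform c d) over the data points,
   for a tie-breaking direction (c, d) independent of (a, b), is extreme. *)
Lemma exists_extreme_argmax (a b : R) : 0 <= a -> 0 <= b -> 0 < a + b ->
  (0 < n)%N ->
  exists2 q, extreme_point T q & forall p, T p -> lform a b p <= lform a b q.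
Proof.
move=> a0 b0 ab0 n0.
pose F i := lform a b (X i, Y i).
have [i1 _ Fmax] := @arg_maxP _ _ _ (Ordinal n0) xpredT F isT.
pose c : R := if a == 0 then 1 else 0; pose d : R := if a == 0 then 0 else 1.
have D : a * d - b * c != 0.
  move: ab0; rewrite /c /d; have [->|a_neq0 _] := eqVneq a 0.
    by rewrite add0r => b_gt0; rewrite mul0r mulr1 sub0r oppr_eq0 gt_eqF.
  by rewrite mulr1 mulr0 subr0.
have c0 : 0 <= c by rewrite /c; case: ifP.
have d0 : 0 <= d by rewrite /d; case: ifP.
pose G i := lform c d (X i, Y i).
have [j /eqP Fj Gmax] := @arg_maxP _ _ _ i1 (fun i => F i == F i1) G (eqxx _).
have Fq p : T p -> lform a b p <= F j.
  by rewrite Fj => Tp; apply: inT_lform_le Tp => // i; apply: Fmax.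
have Gq p : T p -> lform a b p = F j -> lform c d p <= G j.
  rewrite Fj => Tp; apply: inT_lform_face Tp => // [i|i /eqP]; first exact: Fmax.
  exact: Gmax.
exists (X j, Y j); last exact: Fq.
split=> [|u v t Tu Tv t0 t1 jE]; first exact: inT_data.
have {}jE : (X j, Y j) = conv t u v := jE.
have [Fu Fv] : lform a b u = F j /\ lform a b v = F j.
  by apply: conv_eq_max t0 t1 (Fq u Tu) (Fq v Tv) _; rewrite /F jE lform_conv.
have [Gu Gv] : lform c d u = G j /\ lform c d v = G j.
  apply: conv_eq_max t0 t1 (Gq u Tu Fu) (Gq v Tv Fv) _.
  by rewrite /G jE lform_conv.
by rewrite (lform_inj D Fu Gu) (lform_inj D Fv Gv).
Qed.

(* A point w strictly below the chord would be the midpoint of the chord point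
   C above it and of its mirror image below w, which lies in T by free
   disposal. *)
Lemma extreme_point_above_chord u w v :
  T u -> T v -> extreme_point T w -> u.1 < w.1 -> w.1 < v.1 ->
  (v.2 - u.2) * (w.1 - u.1) <= (w.2 - u.2) * (v.1 - u.1).
Proof.
move=> Tu Tv [_ w_ext] uw wv; rewrite leNgt; apply/negP => below.
have uv : 0 < v.1 - u.1 by rewrite subr_gt0 (lt_trans uw).
have [C [TC C1 C2]] : exists C, [/\ T C, C.1 = w.1 & w.2 < C.2].
  exists (conv ((v.1 - w.1) / (v.1 - u.1)) u v); split.
  - apply: inT_conv => //; first by apply: divr_ge0; apply: ltW; rewrite // subr_gt0.
    by rewrite ler_pdivrMr // mul1r lerD2l lerN2 ltW.
  - by rewrite /=; field; rewrite gt_eqF.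
  - rewrite -subr_gt0 (_ : _ - w.2 =
      ((v.2 - u.2) * (w.1 - u.1) - (w.2 - u.2) * (v.1 - u.1)) / (v.1 - u.1)).
      by rewrite divr_gt0 // subr_gt0.
    by rewrite /=; field; rewrite gt_eqF.
pose D := (w.1, w.2 - (C.2 - w.2)).
have TD : T D by apply: inT_free_disposal TC _ _; rewrite /D /= ?C1 //; lra.
have : C = D.
  apply: (w_ext C D (1 / 2)) => //; [lra | lra |].
  by rewrite [w]surjective_pairing /D; congr pair; rewrite /= ?C1; lra.
by move=> /(congr1 snd); rewrite /D /=; lra.
Qed.

End ProductionSet.

Section Frontier.
Variables (R : realFieldType) (n : nat) (X Y : 'I_n -> R).
Variables (phi : nat) (ex ey : nat -> R).
Hypothesis ext_incr :
  forall k : nat, (k.+1 < phi)%N -> ex k < ex k.+1 /\ ey k < ey k.+1.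
Hypothesis extremeE : forall p : R * R, extreme_point (inT X Y) p <->
  exists2 k : nat, (k < phi)%N & p = (ex k, ey k).

Local Notation T := (inT X Y).
Local Notation pt k := (ex k, ey k).

Lemma ex_ey_lt i j : (i < j)%N -> (j < phi)%N -> ex i < ex j /\ ey i < ey j.
Proof.
elim: j => // j IH; rewrite ltnS leq_eqVlt => /predU1P[-> | ij] jphi.
  exact: ext_incr.
have [xij yij] := IH ij (ltnW jphi); have [xj yj] := ext_incr jphi.
by split; [apply: lt_trans xj | apply: lt_trans yj].
Qed.

Lemma ex_ey_le i j : (i <= j)%N -> (j < phi)%N -> ex i <= ex j /\ ey i <= ey j.
Proof.
rewrite leq_eqVlt => /predU1P[-> | ij] jphi; first by split.
by have [? ?] := ex_ey_lt ij jphi; split; apply: ltW.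
Qed.

Lemma extreme_pt k : (k < phi)%N -> extreme_point T (pt k).
Proof. by move=> kphi; apply/extremeE; exists k. Qed.

Lemma inT_pt k : (k < phi)%N -> T (pt k).
Proof. by case/extreme_pt. Qed.

(* L(0) is the line [ef_form L p = ef_level L] through the extreme point
   [pt (ef_anchor L)]; T lies in the half-plane [ef_form L p <= ef_level L]. *)
Definition ef_coef (L : ef_line) : R * R :=
  match L with
  | EF_first => (0, 1)
  | EF_seg k => (ex k.+1 - ex k, ey k.+1 - ey k)
  | EF_last => (1, 0)
  end.

Definition ef_form (L : ef_line) : R * R -> R :=
  lform (ef_coef L).1 (ef_coef L).2.

Definition ef_anchor (L : ef_line) : nat :=
  match L with EF_first => 0 | EF_seg k => k | EF_last => phi.-1 end.

Definition ef_level (L : ef_line) : R := ef_form L (pt (ef_anchor L)).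

Lemma ef_coef_ge0 L : valid_line phi L ->
  [/\ 0 <= (ef_coef L).1, 0 <= (ef_coef L).2
    & 0 < (ef_coef L).1 + (ef_coef L).2].
Proof. by case: L => [_|k /ext_incr [xk yk]|_]; split => /=; lra. Qed.

Lemma on_lineE L s p :
  on_line phi ex ey L s p <-> ef_form L (p.1 - s, p.2 + s) = ef_level L.
Proof.
case: L => [|k|] /=; rewrite /ef_level /ef_form /lform /=; split => E; lra.
Qed.

Lemma on_line_vpt L xh yh s :
  on_line phi ex ey L s (vpt xh yh s) <->
  ef_form L (xh, yh) + (s + s) * ((ef_coef L).1 + (ef_coef L).2) = ef_level L.
Proof. by rewrite on_lineE /ef_form -lform_shift /= opprD !addrA. Qed.

Lemma seg_form_pt_le k m : (k.+1 < phi)%N -> (m < phi)%N ->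
  ef_form (EF_seg k) (pt m) <= ef_level (EF_seg k).
Proof.
move=> kphi mphi; have kphi' := ltnW kphi; have [xk _] := ext_incr kphi.
rewrite /ef_level /ef_form /lform /=.
case: (ltngtP m k) => [mk | km | ->]; last exact: lexx.
  have [xm _] := ex_ey_lt mk kphi'.
  have /= := extreme_point_above_chord (inT_pt mphi) (inT_pt kphi)
    (extreme_pt kphi') xm xk.
  lra.
move: km; rewrite leq_eqVlt => /predU1P[<- | km]; first lra.
have [xm _] := ex_ey_lt km mphi.
have /= := extreme_point_above_chord (inT_pt kphi') (inT_pt mphi)
  (extreme_pt kphi) xk xm.
lra.
Qed.

Lemma ef_form_pt_le L m : valid_line phi L -> (m < phi)%N ->
  ef_form L (pt m) <= ef_level L.
Proof.
case: L => [_|k kphi|_] mphi; rewrite /ef_level /ef_form /lform /=.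
- have [xm _] := ex_ey_le (leq0n m) mphi; lra.
- exact: seg_form_pt_le.
have m_le : (m <= phi.-1)%N by rewrite -ltnS (ltn_predK mphi).
have last_lt : (phi.-1 < phi)%N by rewrite ltn_predL (leq_ltn_trans _ mphi).
have [_ ym] := ex_ey_le m_le last_lt; lra.
Qed.

Lemma inT_ef_form_le L p : valid_line phi L -> T p -> ef_form L p <= ef_level L.
Proof.
move=> vL Tp; have [a0 b0 ab0] := ef_coef_ge0 vL.
have [q /extremeE [m mphi ->] qmax] := exists_extreme_argmax X Y a0 b0 ab0 (inT_gt0 Tp).
exact: le_trans (qmax p Tp) (ef_form_pt_le vL mphi).
Qed.

Lemma min_unc_line_of_frontier_point xh yh L W :
  T (xh, yh) -> valid_line phi L -> T W -> ef_form L W = ef_level L ->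
  W.1 + W.2 = xh + yh -> min_unc_line phi ex ey xh yh L.
Proof.
move=> Th vL TW WL Wsum.
pose g := xh - W.1.
have WE : W = ((xh, yh).1 - g, (xh, yh).2 + g).
  by rewrite [W]surjective_pairing /g /=; congr pair; lra.
have g_le L' s : valid_line phi L' ->
    on_line phi ex ey L' s (vpt xh yh s) -> g <= s + s.
  move=> vL' /on_line_vpt E; have [_ _ w_gt0] := ef_coef_ge0 vL'.
  have := inT_ef_form_le vL' TW.
  by rewrite -E WE /ef_form lform_shift lerD2l ler_pM2r.
have g_ge0 : 0 <= g.
  have [_ _ w_gt0] := ef_coef_ge0 vL; have := inT_ef_form_le vL Th.
  by rewrite -WL WE /ef_form lform_shift lerDl pmulr_lge0.
exists (g / 2); split; last by move=> L' vL' s _ /(g_le L' s vL'); lra.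
split; first lra.
split; last by move=> s _ /(g_le L s vL); lra.
apply/on_line_vpt; rewrite -WL WE /ef_form lform_shift.
by congr (_ + _ * _); field.
Qed.

Lemma min_unc_first xh yh : (0 < phi)%N -> T (xh, yh) ->
  yh + xh <= ey 0%N + ex 0%N -> min_unc_line phi ex ey xh yh EF_first.
Proof.
move=> phi0 Th le0.
apply: (@min_unc_line_of_frontier_point _ _ _ (ex 0%N, yh + xh - ex 0%N)) => //=.
- by apply: inT_free_disposal (inT_pt phi0) _ _ => /=; lra.
- by rewrite /ef_level /ef_form /lform /=; ring.
- lra.
Qed.

Lemma min_unc_last xh yh : (0 < phi)%N -> T (xh, yh) ->
  ey phi.-1 + ex phi.-1 <= yh + xh -> min_unc_line phi ex ey xh yh EF_last.
Proof.
move=> phi0 Th le_last.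
apply: (@min_unc_line_of_frontier_point _ _ _ (yh + xh - ey phi.-1, ey phi.-1)) => //=.
- by apply: inT_free_disposal (inT_pt (k := phi.-1) _) _ _ => /=; rewrite ?ltn_predL //; lra.
- by rewrite /ef_level /ef_form /lform /=; ring.
- lra.
Qed.

Lemma min_unc_seg xh yh k : (k.+1 < phi)%N -> T (xh, yh) ->
  ey k + ex k <= yh + xh -> yh + xh <= ey k.+1 + ex k.+1 ->
  min_unc_line phi ex ey xh yh (EF_seg k).
Proof.
move=> kphi Th lo hi; have [xk yk] := ext_incr kphi.
pose t := (yh + xh - (ey k + ex k)) / (ey k.+1 + ex k.+1 - (ey k + ex k)).
have den_gt0 : 0 < ey k.+1 + ex k.+1 - (ey k + ex k) by lra.
have t0 : 0 <= t by apply: divr_ge0; [rewrite subr_ge0 | apply: ltW].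
have t1 : t <= 1 by rewrite ler_pdivrMr // mul1r; lra.
apply: (@min_unc_line_of_frontier_point _ _ _ (conv t (pt k.+1) (pt k))) => //.
- exact: inT_conv (inT_pt kphi) (inT_pt (ltnW kphi)) t0 t1.
- by rewrite /ef_level /ef_form /lform /=; ring.
- by rewrite /t /=; field; rewrite gt_eqF.
Qed.

End Frontier.

Theorem theorem5 (R : realFieldType) (n : nat) (X Y : 'I_n -> R) (ihat : 'I_n)
    (phi : nat) (ex ey : nat -> R) :
  (2 < phi)%N ->
  (forall k : nat, (k.+1 < phi)%N -> ex k < ex k.+1 /\ ey k < ey k.+1) ->
  (forall p : R * R, extreme_point (inT X Y) p <->
     exists2 k : nat, (k < phi)%N & p = (ex k, ey k)) ->
  let xh := X ihat in let yh := Y ihat in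
  [/\ yh + xh <= ey 0%N + ex 0%N -> min_unc_line phi ex ey xh yh EF_first,
      forall k : nat, (k.+1 < phi)%N ->
        ey k + ex k <= yh + xh -> yh + xh <= ey k.+1 + ex k.+1 ->
        min_unc_line phi ex ey xh yh (EF_seg k)
    & ey phi.-1 + ex phi.-1 <= yh + xh -> min_unc_line phi ex ey xh yh EF_last].
Proof.
move=> phi_gt2 ext_incr extremeE /=.
have phi_gt0 : (0 < phi)%N by apply: ltn_trans phi_gt2.
have Th := inT_data X Y ihat.
split=> [|k kphi|].
- exact/(min_unc_first ext_incr extremeE phi_gt0 Th).
- exact/(min_unc_seg ext_incr extremeE kphi Th).
- exact/(min_unc_last ext_incr extremeE phi_gt0 Th).
Qed.
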